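(* For any set $\Phi\cup\{\psi\}$ of $\mathsf{BSML}^{\oslash}$-formulas, if $\Phi\vdash\psi$ in the natural deduction system $\mathcal{S}^{\oslash}$ described below, then $\Phi\models\psi$.
   Context: Syntax: $\mathsf{BSML}^{\oslash}$-formulas $\phi ::= p \mid \neg\phi \mid (\phi\wedge\phi) \mid (\phi\vee\phi) \mid \Diamond\phi \mid \mathrm{NE}\mid\oslash\phi$. Classical formulas ($\alpha,\beta$): built from $p,\neg,\wedge,\vee,\Diamond$. $\Box\phi:=\neg\Diamond\neg\phi$; $\bot:=p\wedge\neg p$; $\bot\!\!\!\bot:=\bot\wedge\mathrm{NE}$. Semantics on Kripke models $M=(W,R,V)$, states $s\subseteq W$: $s\models p$ iff $s\subseteq V(p)$; $s\dashv p$ iff $s\cap V(p)=\emptyset$; $s\models\mathrm{NE}$ iff $s\ne\emptyset$; $s\dashv\mathrm{NE}$ iff $s=\emptyset$; $s\models\neg\phi$ iff $s\dashv\phi$; $s\dashv\neg\phi$ iff $s\models\phi$; $s\models\phi\wedge\psi$ iff both; $s\dashv\phi\wedge\psi$ iff $s=t\cup u$, $t\dashv\phi$, $u\dashv\psi$; $s\models\phi\vee\psi$ iff $s=t\cup u$, $t\models\phi$, $u\models\psi$; $s\dashv\phi\vee\psi$ iff $s\dashv\phi$ and $s\dashv\psi$; $s\models\Diamond\phi$ iff each $w\in s$ has a nonempty $t\subseteq R[w]$ with $t\models\phi$; $s\dashv\Diamond\phi$ iff $R[w]\dashv\phi$ for all $w\in s$; $s\models\oslash\phi$ iff $s\models\phi$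 or $s=\emptyset$; $s\dashv\oslash\phi$ iff $s\dashv\phi$. $\Phi\models\psi$ iff every state supporting all of $\Phi$ supports $\psi$. An occurrence $[\psi]$ of a subformula in $\phi$ is called distributive if it is not within the scope of any $\neg$ or $\Diamond$ in $\phi$ (recall $\Box=\neg\Diamond\neg$); $\phi[\chi/\psi]$ denotes replacing that occurrence by $\chi$. System $\mathcal{S}^{\oslash}$ ($\Phi\vdash\psi$ iff some natural deduction derivation of $\psi$ has all undischarged assumptions in $\Phi$; ''$A\Leftrightarrow B$'' = both one-step rules): (a) $\wedge$I; $\wedge$E. (b) $\neg$I: from a derivation of $\bot$ from $\alpha$ infer $\neg\alpha$ discharging $\alpha$, provided its undischarged assumptions contain no $\mathrm{NE}$; from $\alpha,\neg\alpha$ infer $\beta$; $\neg\neg\phi\Leftrightarrow\phi$; $\neg(\phi\wedge\psi)\Leftrightarrow\neg\phi\vee\neg\psi$; $\neg(\phi\vee\psi)\Leftrightarrow\neg\phi\wedge\neg\psi$; $\neg\mathrm{NE}\Leftrightarrow\bot$. (c) from $\phi$ infer $\phi\vee\psi$ if $\psi$ contains no $\mathrm{NE}$; from $\phi$ infer $\phi\vee\phi$; from $\phi\vee\psi$ infer $\psi\vee\phi$; $\vee$E: from $\phi\vee\psi$ and derivations of $\chi$ from $\phi$ and from $\psi$ infer $\chi$ (discharging), provided the undischarged assumptions of the subderivations contain no $\mathrm{NE}$; from $\phi\vee\psi$ and a derivation of $\chi$ from $\psi$ whose undischarged assumptions contain no $\mathrm{NE}$ infer $\phi\vee\chi$. (d)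 from $\bot\vee\phi$ infer $\phi$; from $\bot\!\!\!\bot\vee\phi$ infer any $\psi$. (e) if $\psi$ derivable from $\phi$ alone, from $\Diamond\phi$ infer $\Diamond\psi$; if $\psi$ derivable from $\phi_1,\dots,\phi_n$ alone, from $\Box\phi_1,\dots,\Box\phi_n$ infer $\Box\psi$; $\neg\Diamond\phi\Leftrightarrow\Box\neg\phi$. (f) from $\Diamond(\phi\vee(\psi\wedge\mathrm{NE}))$ infer $\Diamond\psi$; from $\Diamond\phi,\Diamond\psi$ infer $\Diamond(\phi\vee\psi)$; from $\Box(\phi\wedge\mathrm{NE})$ infer $\Diamond\phi$; from $\Box\phi,\Diamond\psi$ infer $\Box(\phi\vee\psi)$. ($\oslash$) axiom $\oslash\mathrm{NE}$; from $\bot$ infer $\oslash\phi$; from $\phi$ infer $\oslash\phi$; $\oslash$E: for a distributive occurrence $[\oslash\psi]$ in $\phi$, from $\phi$, a derivation of $\chi$ from $\phi[\psi/\oslash\psi]$ and a derivation of $\chi$ from $\phi[\bot/\oslash\psi]$, infer $\chi$ (discharging); $\neg\oslash\phi\Leftrightarrow\neg\phi$; for a distributive occurrence $[\oslash\psi]$ in $\phi$: from $\Diamond\phi$ infer $\Diamond\phi[\psi/\oslash\psi]\vee\Diamond\phi[\bot/\oslash\psi]$, and from $\Box\phi$ infer $\Box\phi[\psi/\oslash\psi]\vee\Box\phi[\bot/\oslash\psi]$. *)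

From Stdlib Require Import List.
Import ListNotations.

Inductive form : Type :=
| Atom (p : nat)
| Neg (φ : form)
| And (φ ψ : form)
| Or (φ ψ : form)
| Dia (φ : form)
| NE
| Osl (φ : form).

Definition Box (φ : form) : form := Neg (Dia (Neg φ)).
Definition Bot : form := And (Atom 0) (Neg (Atom 0)).
Definition BBot : form := And Bot NE.

Fixpoint classical (φ : form) : Prop :=
  match φ with
  | Atom _ => True
  | Neg a => classical a
  | And a b => classical a /\ classical b
  | Or a b => classical a /\ classical b
  | Dia a => classical a
  | NE => False
  | Osl _ => False
  end.

Fixpoint NEfree (φ : form) : Prop :=
  match φ with
  | Atom _ => True
  | Neg a => NEfree a
  | And a b => NEfree a /\ NEfree b
  | Or a b => NEfree a /\ NEfree b
  | Dia a => NEfree a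
  | NE => False
  | Osl a => NEfree a
  end.

Record model : Type := Model {
  W : Type;
  R : W -> W -> Prop;
  V : nat -> W -> Prop
}.

Fixpoint supp (M : model) (s : W M -> Prop) (φ : form) {struct φ} : Prop :=
  match φ with
  | Atom p => forall w, s w -> V M p w
  | Neg a => anti M s a
  | And a b => supp M s a /\ supp M s b
  | Or a b => exists t u : W M -> Prop,
      (forall w, s w <-> t w \/ u w) /\ supp M t a /\ supp M u b
  | Dia a => forall w, s w ->
      exists t : W M -> Prop, (exists v, t v) /\ (forall v, t v -> R M w v) /\ supp M t a
  | NE => exists w, s w
  | Osl a => supp M s a \/ (forall w, ~ s w)
  end
with anti (M : model) (s : W M -> Prop) (φ : form) {struct φ} : Prop :=
  match φ with
  | Atom p => forall w, s w -> ~ V M p w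
  | Neg a => supp M s a
  | And a b => exists t u : W M -> Prop,
      (forall w, s w <-> t w \/ u w) /\ anti M t a /\ anti M u b
  | Or a b => anti M s a /\ anti M s b
  | Dia a => forall w, s w -> anti M (R M w) a
  | NE => forall w, ~ s w
  | Osl a => anti M s a
  end.

Definition entails (Φ : form -> Prop) (ψ : form) : Prop :=
  forall (M : model) (s : W M -> Prop),
    (forall φ, Φ φ -> supp M s φ) -> supp M s ψ.

(** * Distributive occurrences
    A distributive context is a formula with one hole that is not in the
    scope of any ¬ or ◇; filling the hole with χ gives φ[χ/ψ] where ψ is the
    occurrence at the hole. *)
Inductive dctx : Type :=
| Hole
| CAndL (C : dctx) (ψ : form)
| CAndR (ψ : form) (C : dctx)
| COrL (C : dctx) (ψ : form)
| COrR (ψ : form) (C : dctx)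
| COsl (C : dctx).

Fixpoint fill (C : dctx) (χ : form) : form :=
  match C with
  | Hole => χ
  | CAndL C' ψ => And (fill C' χ) ψ
  | CAndR ψ C' => And ψ (fill C' χ)
  | COrL C' ψ => Or (fill C' χ) ψ
  | COrR ψ C' => Or ψ (fill C' χ)
  | COsl C' => Osl (fill C' χ)
  end.

(** * The natural deduction system S^⊘
    [Der Γ φ] : there is a derivation of φ all of whose undischarged
    assumptions belong to Γ (sequent-style presentation). Side conditions
    "the undischarged assumptions of the subderivation contain no NE" are
    expressed by requiring the subderivation to use only assumptions from an
    NE-free set Δ ⊆ Γ (plus the discharged formula(s)). *)
Definition ctx_add (Γ : form -> Prop) (a : form) : form -> Prop :=
  fun x => Γ x \/ x = a.
Definition ctx_sub (Δ Γ : form -> Prop) : Prop := forall x, Δ x -> Γ x.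
Definition ctx_NEfree (Δ : form -> Prop) : Prop := forall x, Δ x -> NEfree x.

Inductive Der : (form -> Prop) -> form -> Prop :=
| D_hyp Γ φ : Γ φ -> Der Γ φ
| D_andI Γ φ ψ : Der Γ φ -> Der Γ ψ -> Der Γ (And φ ψ)
| D_andE1 Γ φ ψ : Der Γ (And φ ψ) -> Der Γ φ
| D_andE2 Γ φ ψ : Der Γ (And φ ψ) -> Der Γ ψ
| D_negI Γ Δ α : classical α -> ctx_sub Δ Γ -> ctx_NEfree Δ ->
    Der (ctx_add Δ α) Bot -> Der Γ (Neg α)
| D_negE Γ α β : classical α -> classical β ->
    Der Γ α -> Der Γ (Neg α) -> Der Γ β
| D_dneI Γ φ : Der Γ φ -> Der Γ (Neg (Neg φ))
| D_dneE Γ φ : Der Γ (Neg (Neg φ)) -> Der Γ φ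
| D_dmAnd1 Γ φ ψ : Der Γ (Neg (And φ ψ)) -> Der Γ (Or (Neg φ) (Neg ψ))
| D_dmAnd2 Γ φ ψ : Der Γ (Or (Neg φ) (Neg ψ)) -> Der Γ (Neg (And φ ψ))
| D_dmOr1 Γ φ ψ : Der Γ (Neg (Or φ ψ)) -> Der Γ (And (Neg φ) (Neg ψ))
| D_dmOr2 Γ φ ψ : Der Γ (And (Neg φ) (Neg ψ)) -> Der Γ (Neg (Or φ ψ))
| D_negNE1 Γ : Der Γ (Neg NE) -> Der Γ Bot
| D_negNE2 Γ : Der Γ Bot -> Der Γ (Neg NE)
| D_orI Γ φ ψ : NEfree ψ -> Der Γ φ -> Der Γ (Or φ ψ)
| D_orDup Γ φ : Der Γ φ -> Der Γ (Or φ φ)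
| D_orComm Γ φ ψ : Der Γ (Or φ ψ) -> Der Γ (Or ψ φ)
| D_orE Γ Δ φ ψ χ : ctx_sub Δ Γ -> ctx_NEfree Δ ->
    Der Γ (Or φ ψ) -> Der (ctx_add Δ φ) χ -> Der (ctx_add Δ ψ) χ -> Der Γ χ
| D_orMon Γ Δ φ ψ χ : ctx_sub Δ Γ -> ctx_NEfree Δ ->
    Der Γ (Or φ ψ) -> Der (ctx_add Δ ψ) χ -> Der Γ (Or φ χ)
| D_botOr Γ φ : Der Γ (Or Bot φ) -> Der Γ φ
| D_bbotOr Γ φ ψ : Der Γ (Or BBot φ) -> Der Γ ψ
| D_diaMon Γ φ ψ : Der (fun x => x = φ) ψ -> Der Γ (Dia φ) -> Der Γ (Dia ψ)
| D_boxMon Γ (l : list form) ψ : Der (fun x => In x l) ψ ->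
    (forall φ, In φ l -> Der Γ (Box φ)) -> Der Γ (Box ψ)
| D_negDia1 Γ φ : Der Γ (Neg (Dia φ)) -> Der Γ (Box (Neg φ))
| D_negDia2 Γ φ : Der Γ (Box (Neg φ)) -> Der Γ (Neg (Dia φ))
| D_diaSep Γ φ ψ : Der Γ (Dia (Or φ (And ψ NE))) -> Der Γ (Dia ψ)
| D_diaJoin Γ φ ψ : Der Γ (Dia φ) -> Der Γ (Dia ψ) -> Der Γ (Dia (Or φ ψ))
| D_boxDia Γ φ : Der Γ (Box (And φ NE)) -> Der Γ (Dia φ)
| D_boxInst Γ φ ψ : Der Γ (Box φ) -> Der Γ (Dia ψ) -> Der Γ (Box (Or φ ψ))
| D_oslNE Γ : Der Γ (Osl NE)
| D_oslBot Γ φ : Der Γ Bot -> Der Γ (Osl φ)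
| D_oslI Γ φ : Der Γ φ -> Der Γ (Osl φ)
| D_oslE Γ (C : dctx) ψ χ : Der Γ (fill C (Osl ψ)) ->
    Der (ctx_add Γ (fill C ψ)) χ -> Der (ctx_add Γ (fill C Bot)) χ -> Der Γ χ
| D_negOsl1 Γ φ : Der Γ (Neg (Osl φ)) -> Der Γ (Neg φ)
| D_negOsl2 Γ φ : Der Γ (Neg φ) -> Der Γ (Neg (Osl φ))
| D_diaOsl Γ (C : dctx) ψ : Der Γ (Dia (fill C (Osl ψ))) ->
    Der Γ (Or (Dia (fill C ψ)) (Dia (fill C Bot)))
| D_boxOsl Γ (C : dctx) ψ : Der Γ (Box (fill C (Osl ψ))) ->
    Der Γ (Or (Box (fill C ψ)) (Box (fill C Bot))).

(* Three closure properties of team semantics carry the rule-by-rule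
   soundness argument: support and anti-support are closed under unions of
   states, NE-free formulas are moreover downward closed and hold on the empty
   state, and classical formulas are flat, i.e. supported by a state exactly
   when they are true at each of its worlds.  Downward closure is what
   justifies the NE-freeness side conditions of ¬I, ∨E and ∨-monotonicity,
   which re-use the assumptions on substates; the ⊘-rules rest on the
   observation that a state supporting φ[⊘ψ/·] at a distributive position
   supports φ[ψ/·] or φ[⊥/·], since ⊘ψ is supported only where ψ is or where
   the state is empty. *)
From Stdlib Require Import Classical.

Section TeamSemantics.

Variable M : model.
Implicit Types (s t u : W M -> Prop) (φ ψ : form).

Lemma supp_anti_ext φ {s s'} : (forall w, s w <-> s' w) ->
  (supp M s φ -> supp M s' φ) /\ (anti M s φ -> anti M s' φ).
Proof.
  revert s s'; induction φ as [p|φ IH|φ1 IH1 φ2 IH2|φ1 IH1 φ2 IH2|φ IH| |φ IH];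
    intros s s' E; simpl.
  - split; intros H w Hw; apply H, E, Hw.
  - destruct (IH s s' E); tauto.
  - destruct (IH1 s s' E), (IH2 s s' E); split; [tauto|].
    intros (t & u & Htu & Ht & Hu); exists t, u; split; [|tauto].
    intro w; rewrite <- E; apply Htu.
  - destruct (IH1 s s' E), (IH2 s s' E); split; [|tauto].
    intros (t & u & Htu & Ht & Hu); exists t, u; split; [|tauto].
    intro w; rewrite <- E; apply Htu.
  - split; intros H w Hw; apply H, E, Hw.
  - split; [intros [w Hw]; exists w; apply E, Hw|intros H w Hw; apply (H w), E, Hw].
  - destruct (IH s s' E) as [Hsupp Hanti]; split; [|exact Hanti].
    intros [H|H]; [left; auto|right; intros w Hw; apply (H w), E, Hw].
Qed.

Lemma supp_ext φ {s s'} : (forall w, s w <-> s' w) -> supp M s φ -> supp M s' φ.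
Proof. intro E; exact (proj1 (supp_anti_ext φ E)). Qed.

Lemma NEfree_empty φ {s} : NEfree φ -> (forall w, ~ s w) ->
  supp M s φ /\ anti M s φ.
Proof.
  revert s; induction φ as [p|φ IH|φ1 IH1 φ2 IH2|φ1 IH1 φ2 IH2|φ IH| |φ IH];
    intros s HN E; simpl in *.
  - split; intros w Hw; destruct (E w Hw).
  - destruct (IH s HN E); tauto.
  - destruct HN as [N1 N2], (IH1 s N1 E), (IH2 s N2 E).
    split; [tauto|exists s, s; firstorder].
  - destruct HN as [N1 N2], (IH1 s N1 E), (IH2 s N2 E).
    split; [exists s, s; firstorder|tauto].
  - split; intros w Hw; destruct (E w Hw).
  - contradiction.
  - destruct (IH s HN E); tauto.
Qed.

Lemma NEfree_downward_closed φ {s t} : NEfree φ -> (forall w, t w -> s w) ->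
  (supp M s φ -> supp M t φ) /\ (anti M s φ -> anti M t φ).
Proof.
  revert s t; induction φ as [p|φ IH|φ1 IH1 φ2 IH2|φ1 IH1 φ2 IH2|φ IH| |φ IH];
    intros s t HN Hts; simpl in *.
  - split; intros H w Hw; apply H, Hts, Hw.
  - destruct (IH s t HN Hts); tauto.
  - destruct HN as [N1 N2], (IH1 s t N1 Hts), (IH2 s t N2 Hts); split; [tauto|].
    intros (t1 & u1 & E & A1 & A2).
    exists (fun w => t w /\ t1 w), (fun w => t w /\ u1 w); split.
    + intro w; specialize (E w); specialize (Hts w); tauto.
    + split; [apply (IH1 t1)|apply (IH2 u1)]; tauto.
  - destruct HN as [N1 N2], (IH1 s t N1 Hts), (IH2 s t N2 Hts); split; [|tauto].
    intros (t1 & u1 & E & A1 & A2).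
    exists (fun w => t w /\ t1 w), (fun w => t w /\ u1 w); split.
    + intro w; specialize (E w); specialize (Hts w); tauto.
    + split; [apply (IH1 t1)|apply (IH2 u1)]; tauto.
  - split; intros H w Hw; apply H, Hts, Hw.
  - contradiction.
  - destruct (IH s t HN Hts) as [Hsupp Hanti]; split; [|exact Hanti].
    intros [H|H]; [left; auto|right; intros w Hw; apply (H w), Hts, Hw].
Qed.

Lemma union_closed φ {s s1 s2} : (forall w, s w <-> s1 w \/ s2 w) ->
  (supp M s1 φ -> supp M s2 φ -> supp M s φ) /\
  (anti M s1 φ -> anti M s2 φ -> anti M s φ).
Proof.
  revert s s1 s2; induction φ as [p|φ IH|φ1 IH1 φ2 IH2|φ1 IH1 φ2 IH2|φ IH| |φ IH];
    intros s s1 s2 E; simpl.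
  - split; intros H1 H2 w Hw; destruct (proj1 (E w) Hw); auto.
  - destruct (IH s s1 s2 E); tauto.
  - destruct (IH1 s s1 s2 E), (IH2 s s1 s2 E); split; [tauto|].
    intros (t1 & u1 & E1 & A1 & B1) (t2 & u2 & E2 & A2 & B2).
    exists (fun w => t1 w \/ t2 w), (fun w => u1 w \/ u2 w); split.
    + intro w; rewrite E, E1, E2; tauto.
    + split; [apply (IH1 _ t1 t2)|apply (IH2 _ u1 u2)]; tauto.
  - destruct (IH1 s s1 s2 E), (IH2 s s1 s2 E); split; [|tauto].
    intros (t1 & u1 & E1 & A1 & B1) (t2 & u2 & E2 & A2 & B2).
    exists (fun w => t1 w \/ t2 w), (fun w => u1 w \/ u2 w); split.
    + intro w; rewrite E, E1, E2; tauto.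
    + split; [apply (IH1 _ t1 t2)|apply (IH2 _ u1 u2)]; tauto.
  - split; intros H1 H2 w Hw; destruct (proj1 (E w) Hw); auto.
  - split.
    + intros [w Hw] _; exists w; apply E; auto.
    + intros H1 H2 w Hw; destruct (proj1 (E w) Hw); [apply (H1 w)|apply (H2 w)]; auto.
  - destruct (IH s s1 s2 E); split; [|tauto].
    intros [H1|H1] [H2|H2].
    + left; auto.
    + left; apply (supp_ext φ (s := s1)); [|exact H1].
      intro w; specialize (E w); specialize (H2 w); tauto.
    + left; apply (supp_ext φ (s := s2)); [|exact H2].
      intro w; specialize (E w); specialize (H1 w); tauto.
    + right; intros w Hw; destruct (proj1 (E w) Hw); [eapply H1|eapply H2]; eauto.
Qed.

Fixpoint holds (w : W M) φ : Prop :=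
  match φ with
  | Atom p => V M p w
  | Neg a => ~ holds w a
  | And a b => holds w a /\ holds w b
  | Or a b => holds w a \/ holds w b
  | Dia a => exists v, R M w v /\ holds v a
  | NE | Osl _ => False
  end.

Lemma classical_flat φ s : classical φ ->
  (supp M s φ <-> forall w, s w -> holds w φ) /\
  (anti M s φ <-> forall w, s w -> ~ holds w φ).
Proof.
  revert s; induction φ as [p|φ IH|φ1 IH1 φ2 IH2|φ1 IH1 φ2 IH2|φ IH| |φ IH];
    intros s HC; simpl in *; try contradiction.
  - tauto.
  - destruct (IH s HC) as [Hsupp Hanti]; split; [exact Hanti|].
    rewrite Hsupp; split; intros H w Hw; [auto|apply NNPP; auto].
  - destruct HC as [C1 C2]; rewrite (proj1 (IH1 s C1)), (proj1 (IH2 s C2)).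
    split; [firstorder|split].
    + intros (t & u & E & Ht & Hu) w Hw [T1 T2].
      destruct (proj1 (E w) Hw) as [Htw|Huw].
      * exact (proj1 (proj2 (IH1 t C1)) Ht w Htw T1).
      * exact (proj1 (proj2 (IH2 u C2)) Hu w Huw T2).
    + intros H; exists (fun w => s w /\ ~ holds w φ1), (fun w => s w /\ ~ holds w φ2).
      split; [intro w; specialize (H w); tauto|].
      split; [apply (IH1 _ C1)|apply (IH2 _ C2)]; tauto.
  - destruct HC as [C1 C2]; rewrite (proj2 (IH1 s C1)), (proj2 (IH2 s C2)).
    split; [split|firstorder].
    + intros (t & u & E & Ht & Hu) w Hw.
      destruct (proj1 (E w) Hw); [left; apply (IH1 t C1)|right; apply (IH2 u C2)]; auto.
    + intros H; exists (fun w => s w /\ holds w φ1), (fun w => s w /\ holds w φ2).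
      split; [intro w; specialize (H w); tauto|].
      split; [apply (IH1 _ C1)|apply (IH2 _ C2)]; tauto.
  - split; split.
    + intros H w Hw; destruct (H w Hw) as (t & [v Hv] & Rt & Ht).
      exists v; split; [auto|apply (IH t HC); auto].
    + intros H w Hw; destruct (H w Hw) as (v & Rv & Hv).
      exists (fun x => x = v); split; [eauto|split; [intros x ->; auto|]].
      apply (IH _ HC); intros x ->; auto.
    + intros H w Hw (v & Rv & Hv); exact (proj1 (proj2 (IH _ HC)) (H w Hw) v Rv Hv).
    + intros H w Hw; apply (IH _ HC); intros v Rv Hv; apply (H w Hw); eauto.
Qed.

Lemma supp_Bot s : supp M s Bot <-> forall w, ~ s w.
Proof.
  simpl; split.
  - intros [H1 H2] w Hw; exact (H2 w Hw (H1 w Hw)).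
  - intros H; split; intros w Hw; destruct (H w Hw).
Qed.

Lemma supp_fill_Osl C ψ {s} : supp M s (fill C (Osl ψ)) ->
  supp M s (fill C ψ) \/ supp M s (fill C Bot).
Proof.
  revert s; induction C as [|C IH χ|χ C IH|C IH χ|χ C IH|C IH]; intros s H; simpl in *.
  - destruct H as [H|H]; [left|right; apply supp_Bot]; auto.
  - destruct H as [H1 H2]; destruct (IH s H1); tauto.
  - destruct H as [H1 H2]; destruct (IH s H2); tauto.
  - destruct H as (t & u & E & Ht & Hu); destruct (IH t Ht); [left|right]; exists t, u; auto.
  - destruct H as (t & u & E & Ht & Hu); destruct (IH u Hu); [left|right]; exists t, u; auto.
  - destruct H as [H|H]; [destruct (IH s H)|]; tauto.
Qed.

Lemma supp_Dia_split {φ α β s} :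
  (forall t, supp M t φ -> supp M t α \/ supp M t β) ->
  supp M s (Dia φ) -> supp M s (Or (Dia α) (Dia β)).
Proof.
  intros Hsplit H.
  pose (witnessed γ w := exists t, (exists v, t v) /\ (forall v, t v -> R M w v) /\ supp M t γ).
  exists (fun w => s w /\ witnessed α w), (fun w => s w /\ witnessed β w).
  split; [|split; intros w [_ Hw]; exact Hw].
  intro w; split; [intro Hw|tauto].
  destruct (H w Hw) as (t & Ht & Rt & St).
  destruct (Hsplit t St); [left|right]; split; auto; exists t; auto.
Qed.

Lemma supp_Box_split {φ α β s} :
  (forall t, supp M t φ -> supp M t α \/ supp M t β) ->
  supp M s (Box φ) -> supp M s (Or (Box α) (Box β)).
Proof.
  intros Hsplit H.
  exists (fun w => s w /\ supp M (R M w) α), (fun w => s w /\ supp M (R M w) β).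
  split; [|split; intros w [_ Hw]; exact Hw].
  intro w; split; [intro Hw|tauto].
  destruct (Hsplit _ (H w Hw)); [left|right]; auto.
Qed.

End TeamSemantics.

Lemma supp_ctx_restrict {M Γ Δ s t} : ctx_sub Δ Γ -> ctx_NEfree Δ ->
  (forall φ, Γ φ -> supp M s φ) -> (forall w, t w -> s w) ->
  forall φ, Δ φ -> supp M t φ.
Proof.
  intros HΔ HN HΓ Hts φ Hφ.
  exact (proj1 (NEfree_downward_closed M φ (HN φ Hφ) Hts) (HΓ φ (HΔ φ Hφ))).
Qed.

Lemma supp_ctx_add {M Γ a s} : (forall φ, Γ φ -> supp M s φ) -> supp M s a ->
  forall φ, ctx_add Γ a φ -> supp M s φ.
Proof. intros HΓ Ha φ [Hφ| ->]; auto. Qed.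

Lemma entails_hyp Γ φ : Γ φ -> entails Γ φ.
Proof. intros Hφ M s HΓ; exact (HΓ φ Hφ). Qed.

Lemma entails_andI Γ φ ψ : entails Γ φ -> entails Γ ψ -> entails Γ (And φ ψ).
Proof. intros Hφ Hψ M s HΓ; split; auto. Qed.

Lemma entails_andE1 Γ φ ψ : entails Γ (And φ ψ) -> entails Γ φ.
Proof. intros H M s HΓ; apply (H M s HΓ). Qed.

Lemma entails_andE2 Γ φ ψ : entails Γ (And φ ψ) -> entails Γ ψ.
Proof. intros H M s HΓ; apply (H M s HΓ). Qed.

(* A world violating α would give the singleton state a model of the
   assumptions of the subderivation (by downward closure) and of α (by
   flatness), hence of ⊥. *)
Lemma entails_negI Γ Δ α : classical α -> ctx_sub Δ Γ -> ctx_NEfree Δ ->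
  entails (ctx_add Δ α) Bot -> entails Γ (Neg α).
Proof.
  intros Hα HΔ HN H M s HΓ.
  apply (proj2 (classical_flat M α s Hα)); intros w Hw Tw.
  refine (proj1 (supp_Bot M (fun x => x = w)) (H M _ _) w eq_refl).
  apply supp_ctx_add.
  - apply (supp_ctx_restrict HΔ HN HΓ); intros x ->; exact Hw.
  - apply (classical_flat M α _ Hα); intros x ->; exact Tw.
Qed.

Lemma entails_negE Γ α β : classical α -> classical β ->
  entails Γ α -> entails Γ (Neg α) -> entails Γ β.
Proof.
  intros Hα Hβ H Hneg M s HΓ.
  apply (classical_flat M β s Hβ); intros w Hw; exfalso.
  exact (proj1 (proj2 (classical_flat M α s Hα)) (Hneg M s HΓ) w Hw
           (proj1 (proj1 (classical_flat M α s Hα)) (H M s HΓ) w Hw)).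
Qed.

Lemma entails_Bot_of_negNE Γ : entails Γ (Neg NE) -> entails Γ Bot.
Proof. intros H M s HΓ; apply supp_Bot, (H M s HΓ). Qed.

Lemma entails_negNE_of_Bot Γ : entails Γ Bot -> entails Γ (Neg NE).
Proof. intros H M s HΓ; exact (proj1 (supp_Bot M s) (H M s HΓ)). Qed.

Lemma entails_orI Γ φ ψ : NEfree ψ -> entails Γ φ -> entails Γ (Or φ ψ).
Proof.
  intros HN H M s HΓ; exists s, (fun _ => False).
  split; [tauto|split; [auto|apply NEfree_empty; auto]].
Qed.

Lemma entails_orDup Γ φ : entails Γ φ -> entails Γ (Or φ φ).
Proof. intros H M s HΓ; exists s, s; split; [tauto|auto]. Qed.

Lemma entails_orComm Γ φ ψ : entails Γ (Or φ ψ) -> entails Γ (Or ψ φ).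
Proof.
  intros H M s HΓ; destruct (H M s HΓ) as (t & u & E & Ht & Hu).
  exists u, t; split; [intro w; rewrite E; tauto|auto].
Qed.

Lemma entails_orE Γ Δ φ ψ χ : ctx_sub Δ Γ -> ctx_NEfree Δ -> entails Γ (Or φ ψ) ->
  entails (ctx_add Δ φ) χ -> entails (ctx_add Δ ψ) χ -> entails Γ χ.
Proof.
  intros HΔ HN H Hφ Hψ M s HΓ; destruct (H M s HΓ) as (t & u & E & Ht & Hu).
  apply (proj1 (union_closed M χ E)).
  - apply Hφ, supp_ctx_add; auto.
    apply (supp_ctx_restrict HΔ HN HΓ); intros w Hw; apply E; auto.
  - apply Hψ, supp_ctx_add; auto.
    apply (supp_ctx_restrict HΔ HN HΓ); intros w Hw; apply E; auto.
Qed.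

Lemma entails_orMon Γ Δ φ ψ χ : ctx_sub Δ Γ -> ctx_NEfree Δ -> entails Γ (Or φ ψ) ->
  entails (ctx_add Δ ψ) χ -> entails Γ (Or φ χ).
Proof.
  intros HΔ HN H Hψ M s HΓ; destruct (H M s HΓ) as (t & u & E & Ht & Hu).
  exists t, u; split; [exact E|split; [exact Ht|]].
  apply Hψ, supp_ctx_add; auto.
  apply (supp_ctx_restrict HΔ HN HΓ); intros w Hw; apply E; auto.
Qed.

Lemma entails_botOr Γ φ : entails Γ (Or Bot φ) -> entails Γ φ.
Proof.
  intros H M s HΓ; destruct (H M s HΓ) as (t & u & E & Ht & Hu).
  apply (supp_ext M φ (s := u)); [|exact Hu].
  intro w; specialize (E w); pose proof (proj1 (supp_Bot M t) Ht w); tauto.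
Qed.

Lemma entails_bbotOr Γ φ ψ : entails Γ (Or BBot φ) -> entails Γ ψ.
Proof.
  intros H M s HΓ; destruct (H M s HΓ) as (t & u & E & [Ht [w Hw]] & Hu).
  destruct (proj1 (supp_Bot M t) Ht w Hw).
Qed.

Lemma entails_diaMon Γ φ ψ : entails (fun x => x = φ) ψ ->
  entails Γ (Dia φ) -> entails Γ (Dia ψ).
Proof.
  intros Hφψ H M s HΓ w Hw; destruct (H M s HΓ w Hw) as (t & Ht & Rt & St).
  exists t; split; [|split]; auto.
  apply Hφψ; intros x ->; exact St.
Qed.

Lemma entails_boxMon Γ Δ ψ : entails Δ ψ ->
  (forall φ, Δ φ -> entails Γ (Box φ)) -> entails Γ (Box ψ).
Proof. intros HΔψ H M s HΓ w Hw; apply HΔψ; intros φ Hφ; exact (H φ Hφ M s HΓ w Hw). Qed.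

Lemma entails_diaSep Γ φ ψ : entails Γ (Dia (Or φ (And ψ NE))) -> entails Γ (Dia ψ).
Proof.
  intros H M s HΓ w Hw.
  destruct (H M s HΓ w Hw) as (t & Ht & Rt & (t1 & u1 & E & Ht1 & Hu1 & Hne)).
  exists u1; split; [exact Hne|split; [intros v Hv; apply Rt, E; auto|exact Hu1]].
Qed.

Lemma entails_diaJoin Γ φ ψ : entails Γ (Dia φ) -> entails Γ (Dia ψ) ->
  entails Γ (Dia (Or φ ψ)).
Proof.
  intros Hφ Hψ M s HΓ w Hw.
  destruct (Hφ M s HΓ w Hw) as (t1 & [v Hv] & R1 & S1).
  destruct (Hψ M s HΓ w Hw) as (t2 & _ & R2 & S2).
  exists (fun v => t1 v \/ t2 v); split; [eauto|split; [intros x [Hx|Hx]; auto|]].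
  exists t1, t2; split; [tauto|auto].
Qed.

Lemma entails_boxDia Γ φ : entails Γ (Box (And φ NE)) -> entails Γ (Dia φ).
Proof.
  intros H M s HΓ w Hw; destruct (H M s HΓ w Hw) as [Hφ Hne].
  exists (R M w); auto.
Qed.

Lemma entails_boxInst Γ φ ψ : entails Γ (Box φ) -> entails Γ (Dia ψ) ->
  entails Γ (Box (Or φ ψ)).
Proof.
  intros Hφ Hψ M s HΓ w Hw.
  destruct (Hψ M s HΓ w Hw) as (t & _ & Rt & St).
  exists (R M w), t; split; [firstorder|split; [exact (Hφ M s HΓ w Hw)|exact St]].
Qed.

Lemma entails_oslNE Γ : entails Γ (Osl NE).
Proof.
  intros M s _; destruct (classic (exists w, s w)) as [H|H]; [left|right]; firstorder.
Qed.

Lemma entails_oslBot Γ φ : entails Γ Bot -> entails Γ (Osl φ).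
Proof. intros H M s HΓ; right; apply supp_Bot, (H M s HΓ). Qed.

Lemma entails_oslI Γ φ : entails Γ φ -> entails Γ (Osl φ).
Proof. intros H M s HΓ; left; apply (H M s HΓ). Qed.

Lemma entails_oslE Γ C ψ χ : entails Γ (fill C (Osl ψ)) ->
  entails (ctx_add Γ (fill C ψ)) χ -> entails (ctx_add Γ (fill C Bot)) χ ->
  entails Γ χ.
Proof.
  intros H Hψ HBot M s HΓ.
  destruct (supp_fill_Osl M C ψ (H M s HΓ)); [apply Hψ|apply HBot];
    apply supp_ctx_add; auto.
Qed.

Lemma entails_diaOsl Γ C ψ : entails Γ (Dia (fill C (Osl ψ))) ->
  entails Γ (Or (Dia (fill C ψ)) (Dia (fill C Bot))).
Proof. intros H M s HΓ; exact (supp_Dia_split M (@supp_fill_Osl M C ψ) (H M s HΓ)). Qed.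

Lemma entails_boxOsl Γ C ψ : entails Γ (Box (fill C (Osl ψ))) ->
  entails Γ (Or (Box (fill C ψ)) (Box (fill C Bot))).
Proof. intros H M s HΓ; exact (supp_Box_split M (@supp_fill_Osl M C ψ) (H M s HΓ)). Qed.

Theorem theorem4p25 (Φ : form -> Prop) (ψ : form) :
  Der Φ ψ -> entails Φ ψ.
Proof.
  induction 1;
    (* ¬¬, De Morgan, ¬◇ and ¬⊘ rules: premise and conclusion have the same support *)
    first [ exact IHDer
          | eauto 2 using entails_hyp, entails_andI, entails_andE1, entails_andE2,
              entails_negI, entails_negE, entails_Bot_of_negNE, entails_negNE_of_Bot,
              entails_orI, entails_orDup, entails_orComm, entails_orE, entails_orMon,
              entails_botOr, entails_bbotOr, entails_diaMon, entails_boxMon,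
              entails_diaSep, entails_diaJoin, entails_boxDia, entails_boxInst,
              entails_oslNE, entails_oslBot, entails_oslI, entails_oslE,
              entails_diaOsl, entails_boxOsl ].
Qed.
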